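(* Let $\mathbf{S}$ be any one of the four systems $\mathbf{G3N}$, $\mathbf{G3NeF}$, $\mathbf{G3CoPC}$, $\mathbf{G3MPC}$. The contraction rule ''from $\Gamma,\alpha,\alpha\Rightarrow\varphi$ infer $\Gamma,\alpha\Rightarrow\varphi$'' is height-preserving admissible in $\mathbf{S}$: for all finite multisets $\Gamma$ and formulas $\alpha,\varphi$, if $\Gamma,\alpha,\alpha\Rightarrow\varphi$ has a derivation in $\mathbf{S}$ of height at most $n$, then $\Gamma,\alpha\Rightarrow\varphi$ has a derivation in $\mathbf{S}$ of height at most $n$.
   Context: Formulas are generated from a countable set of propositional variables $p,q,\dots$ and the constant $\top$ by the grammar $\varphi::= p\mid\top\mid\varphi\wedge\varphi\mid\varphi\vee\varphi\mid\varphi\to\varphi\mid\neg\varphi$ (there is no constant $\bot$). $\varphi\leftrightarrow\psi$ abbreviates $(\varphi\to\psi)\wedge(\psi\to\varphi)$. A sequent is an expression $\Gamma\Rightarrow\varphi$ where $\Gamma$ is a finite multiset of formulas and $\varphi$ is a formula (the goal); $\Gamma,\Delta$ denotes multiset union and $\Gamma,\alpha$ denotes $\Gamma$ with one more occurrence of $\alpha$. Rules ($p$ a propositional variable): (ax) $\Gamma,p\Rightarrow p$ (no premises); ($\top$) $\Gamma\Rightarrow\top$ (no premises); ($\to$r) from $\Gamma,\alpha\Rightarrow\beta$ infer $\Gamma\Rightarrow\alpha\to\beta$; ($\to$l) from $\Gamma,\alpha\to\beta\Rightarrow\alpha$ and $\Gamma,\beta\Rightarrow\varphi$ infer $\Gamma,\alpha\to\beta\Rightarrow\varphi$;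 ($\wedge$r) from $\Gamma\Rightarrow\alpha$ and $\Gamma\Rightarrow\beta$ infer $\Gamma\Rightarrow\alpha\wedge\beta$; ($\wedge$l) from $\Gamma,\alpha,\beta\Rightarrow\varphi$ infer $\Gamma,\alpha\wedge\beta\Rightarrow\varphi$; ($\vee$r$_1$), ($\vee$r$_2$) from $\Gamma\Rightarrow\alpha$ (resp. $\Gamma\Rightarrow\beta$) infer $\Gamma\Rightarrow\alpha\vee\beta$; ($\vee$l) from $\Gamma,\alpha\Rightarrow\varphi$ and $\Gamma,\beta\Rightarrow\varphi$ infer $\Gamma,\alpha\vee\beta\Rightarrow\varphi$; (n) from $\Gamma,\neg\alpha,\beta\Rightarrow\alpha$ and $\Gamma,\neg\alpha,\alpha\Rightarrow\beta$ infer $\Gamma,\neg\alpha\Rightarrow\neg\beta$; (nef) from $\Gamma,\neg\alpha\Rightarrow\alpha$ infer $\Gamma,\neg\alpha\Rightarrow\neg\beta$; (copc) from $\Gamma,\neg\alpha,\beta\Rightarrow\alpha$ infer $\Gamma,\neg\alpha\Rightarrow\neg\beta$; (an) from $\Gamma,\alpha\Rightarrow\neg\alpha$ infer $\Gamma\Rightarrow\neg\alpha$. The rules (ax) through ($\vee$l) are the positive rules. The four systems are: $\mathbf{G3N}$ = positive rules + (n); $\mathbf{G3NeF}$ = positive rules + (n) + (nef); $\mathbf{G3CoPC}$ = positive rules + (copc); $\mathbf{G3MPC}$ = positive rules + (copc) + (an). None of them contains weakening, contraction or cut as a rule. A derivation is a finite tree of rule instances with leaves instances of (ax) or ($\top$);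 its height is the number of inference steps on a longest branch. A sequent is derivable if it has a derivation; a formula $\varphi$ is a theorem if $\Rightarrow\varphi$ (empty antecedent) is derivable. *)

From Stdlib Require Import List Permutation.
Import ListNotations.

Inductive form : Type :=
| Var : nat -> form
| Top : form
| And : form -> form -> form
| Or  : form -> form -> form
| Imp : form -> form -> form
| Neg : form -> form.

Inductive system : Type := G3N | G3NeF | G3CoPC | G3MPC.

Definition has_n (Sy : system) : bool :=
  match Sy with G3N | G3NeF => true | _ => false end.
Definition has_nef (Sy : system) : bool :=
  match Sy with G3NeF => true | _ => false end.
Definition has_copc (Sy : system) : bool :=
  match Sy with G3CoPC | G3MPC => true | _ => false end.
Definition has_an (Sy : system) : bool :=
  match Sy with G3MPC => true | _ => false end.

(* Antecedents are multisets: the constructor dh_perm identifies lists up to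
   permutation (it is not an inference step and does not increase height). *)
Inductive dh (Sy : system) : nat -> list form -> form -> Prop :=
| dh_perm : forall n G G' phi, Permutation G G' -> dh Sy n G phi -> dh Sy n G' phi
| dh_ax : forall n G p, dh Sy n (Var p :: G) (Var p)
| dh_top : forall n G, dh Sy n G Top
| dh_impR : forall n G a b, dh Sy n (a :: G) b -> dh Sy (S n) G (Imp a b)
| dh_impL : forall n G a b phi,
    dh Sy n (Imp a b :: G) a -> dh Sy n (b :: G) phi -> dh Sy (S n) (Imp a b :: G) phi
| dh_andR : forall n G a b, dh Sy n G a -> dh Sy n G b -> dh Sy (S n) G (And a b)
| dh_andL : forall n G a b phi, dh Sy n (a :: b :: G) phi -> dh Sy (S n) (And a b :: G) phi
| dh_orR1 : forall n G a b, dh Sy n G a -> dh Sy (S n) G (Or a b)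
| dh_orR2 : forall n G a b, dh Sy n G b -> dh Sy (S n) G (Or a b)
| dh_orL : forall n G a b phi,
    dh Sy n (a :: G) phi -> dh Sy n (b :: G) phi -> dh Sy (S n) (Or a b :: G) phi
| dh_n : forall n G a b, has_n Sy = true ->
    dh Sy n (Neg a :: b :: G) a -> dh Sy n (Neg a :: a :: G) b ->
    dh Sy (S n) (Neg a :: G) (Neg b)
| dh_nef : forall n G a b, has_nef Sy = true ->
    dh Sy n (Neg a :: G) a -> dh Sy (S n) (Neg a :: G) (Neg b)
| dh_copc : forall n G a b, has_copc Sy = true ->
    dh Sy n (Neg a :: b :: G) a -> dh Sy (S n) (Neg a :: G) (Neg b)
| dh_an : forall n G a, has_an Sy = true ->
    dh Sy n (a :: G) (Neg a) -> dh Sy (S n) G (Neg a).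

(* The core of the file is one replacement principle
   ([replacement_admissible]): to show that replacing a block [Δ x] of the
   antecedent by [Δ' x] preserves derivability at every height, it suffices to
   treat axioms and the left rules whose principal formula lies in [Δ x]; all
   other rule instances commute with the replacement by induction on height.

   With blocks [[X]] it yields height-preserving inversion of the left rules
   for ∧, ∨ and (the right premise of) → ([invert_single]); with the block
   [[a; a]] replaced by [[a]] it yields contraction, whose principal cases
   combine those inversions with contraction at smaller height
   ([contraction_principal]), as in the paper. *)

From Stdlib Require Import List Permutation Wf_nat.
Import ListNotations.

(* [perm_solve] closes [Permutation l r] when [l] and [r] list the same
   formulas, in any order, in front of a common tail: each head of [l] is
   moved to the front of [r] by adjacent swaps and cancelled. *)
Lemma perm_swap_under (A : Type) (x y : A) (r r' : list A) :
  Permutation r (x :: r') -> Permutation (y :: r) (x :: y :: r').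
Proof. intro H. rewrite H. apply perm_swap. Qed.

Lemma perm_cancel_head (A : Type) (x : A) (l r r' : list A) :
  Permutation r (x :: r') -> Permutation l r' -> Permutation (x :: l) r.
Proof. intros H1 H2. rewrite H1, H2. reflexivity. Qed.

Ltac perm_to_front :=
  first [ apply Permutation_refl | apply perm_swap_under; perm_to_front ].
Ltac perm_cancel :=
  first [ apply Permutation_refl
        | eapply perm_cancel_head; [ perm_to_front | perm_cancel ] ].
Ltac perm_solve := cbn [app]; perm_cancel.

Lemma in_perm_cons (A : Type) (x : A) (l : list A) :
  In x l -> exists l', Permutation l (x :: l').
Proof.
  intro Hin. apply in_split in Hin as [l1 [l2 ->]].
  exists (l1 ++ l2). symmetry. apply Permutation_middle.
Qed.

Lemma dh_mono Sy n G phi : dh Sy n G phi -> dh Sy (S n) G phi.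
Proof.
  induction 1.
  - eapply dh_perm; eauto.
  - apply dh_ax.
  - apply dh_top.
  - apply dh_impR; auto.
  - apply dh_impL; auto.
  - apply dh_andR; auto.
  - apply dh_andL; auto.
  - apply dh_orR1; auto.
  - apply dh_orR2; auto.
  - apply dh_orL; auto.
  - apply dh_n; auto.
  - apply dh_nef; auto.
  - apply dh_copc; auto.
  - apply dh_an; auto.
Qed.

Lemma dh_axiom Sy n L p : In (Var p) L -> dh Sy n L (Var p).
Proof.
  intro Hin. destruct (in_perm_cons _ _ _ Hin) as [L' HL].
  apply (dh_perm _ _ (Var p :: L')); [symmetry; exact HL | apply dh_ax].
Qed.

(* A premise [(Γ, ψ)] of a rule with passive context [G]
   stands for the sequent [Γ ++ G ⇒ ψ].  A right rule keeps the whole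
   antecedent passive; a left rule with principal formula [Y] has
   conclusion [Y :: G ⇒ φ]. *)
Inductive right_rule (Sy : system) : form -> list (list form * form) -> Prop :=
| rr_imp a b : right_rule Sy (Imp a b) [([a], b)]
| rr_and a b : right_rule Sy (And a b) [([], a); ([], b)]
| rr_or1 a b : right_rule Sy (Or a b) [([], a)]
| rr_or2 a b : right_rule Sy (Or a b) [([], b)]
| rr_an a : has_an Sy = true -> right_rule Sy (Neg a) [([a], Neg a)].

Inductive left_rule (Sy : system) : form -> form -> list (list form * form) -> Prop :=
| lr_imp a b phi : left_rule Sy (Imp a b) phi [([Imp a b], a); ([b], phi)]
| lr_and a b phi : left_rule Sy (And a b) phi [([a; b], phi)]
| lr_or a b phi : left_rule Sy (Or a b) phi [([a], phi); ([b], phi)]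
| lr_n a b : has_n Sy = true ->
    left_rule Sy (Neg a) (Neg b) [([Neg a; b], a); ([Neg a; a], b)]
| lr_nef a b : has_nef Sy = true -> left_rule Sy (Neg a) (Neg b) [([Neg a], a)]
| lr_copc a b : has_copc Sy = true -> left_rule Sy (Neg a) (Neg b) [([Neg a; b], a)].

Fixpoint premises_hold (Sy : system) (n : nat) (G : list form)
    (ps : list (list form * form)) : Prop :=
  match ps with
  | [] => True
  | (Γ, ψ) :: ps' => dh Sy n (Γ ++ G) ψ /\ premises_hold Sy n G ps'
  end.

Lemma premises_hold_impl Sy n n' G G' ps :
  (forall Γ ψ, dh Sy n (Γ ++ G) ψ -> dh Sy n' (Γ ++ G') ψ) ->
  premises_hold Sy n G ps -> premises_hold Sy n' G' ps.
Proof.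
  intro Himpl. induction ps as [|[Γ ψ] ps IH]; cbn; [auto|].
  intros [D Ds]. split; auto.
Qed.

Lemma premises_hold_In Sy n G ps Γ ψ :
  premises_hold Sy n G ps -> In (Γ, ψ) ps -> dh Sy n (Γ ++ G) ψ.
Proof.
  induction ps as [|[Γ' ψ'] ps IH]; cbn; [contradiction|].
  intros [D Ds] [E | Hin]; [injection E as <- <-; exact D | auto].
Qed.

Lemma premises_perm Sy n G G' ps :
  Permutation G G' -> premises_hold Sy n G ps -> premises_hold Sy n G' ps.
Proof.
  intro HG. apply premises_hold_impl. intros Γ ψ D.
  apply (dh_perm _ _ _ _ _ (Permutation_app_head Γ HG) D).
Qed.

Lemma dh_right Sy n G phi ps :
  right_rule Sy phi ps -> premises_hold Sy n G ps -> dh Sy (S n) G phi.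
Proof.
  intros R Hps. destruct R; cbn in Hps.
  - apply dh_impR. tauto.
  - apply dh_andR; tauto.
  - apply dh_orR1. tauto.
  - apply dh_orR2. tauto.
  - apply dh_an; tauto.
Qed.

Lemma dh_left Sy n Y G phi ps :
  left_rule Sy Y phi ps -> premises_hold Sy n G ps -> dh Sy (S n) (Y :: G) phi.
Proof.
  intros R Hps. destruct R; cbn in Hps.
  - apply dh_impL; tauto.
  - apply dh_andL. tauto.
  - apply dh_orL; tauto.
  - apply dh_n; tauto.
  - apply dh_nef; tauto.
  - apply dh_copc; tauto.
Qed.

(* The last step of a derivation, with exchange absorbed. *)
Inductive dh_view (Sy : system) : nat -> list form -> form -> Prop :=
| view_ax n L p : In (Var p) L -> dh_view Sy n L (Var p)
| view_top n L : dh_view Sy n L Top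
| view_right n L phi ps :
    right_rule Sy phi ps -> premises_hold Sy n L ps -> dh_view Sy (S n) L phi
| view_left n L Y G phi ps : Permutation L (Y :: G) ->
    left_rule Sy Y phi ps -> premises_hold Sy n G ps -> dh_view Sy (S n) L phi.

Lemma dh_view_perm Sy n L L' phi :
  Permutation L L' -> dh_view Sy n L phi -> dh_view Sy n L' phi.
Proof.
  intros HL V. destruct V as [n L p Hin | n L | n L phi ps R Hps | n L Y G phi ps HY R Hps].
  - apply view_ax. exact (Permutation_in _ HL Hin).
  - apply view_top.
  - apply (view_right _ _ _ _ ps R). exact (premises_perm _ _ _ _ _ HL Hps).
  - apply (view_left _ _ _ Y G _ ps); [rewrite <- HL; exact HY | exact R | exact Hps].
Qed.

Lemma dh_view_of Sy n L phi : dh Sy n L phi -> dh_view Sy n L phi.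
Proof.
  induction 1 as [n G G' phi HG _ IH | | | | | | | | | | | | |].
  - exact (dh_view_perm _ _ _ _ _ HG IH).
  - apply view_ax. left. reflexivity.
  - apply view_top.
  - eapply view_right; [apply rr_imp | cbn; tauto].
  - eapply view_left; [apply Permutation_refl | apply lr_imp | cbn; tauto].
  - eapply view_right; [apply rr_and | cbn; tauto].
  - eapply view_left; [apply Permutation_refl | apply lr_and | cbn; tauto].
  - eapply view_right; [apply rr_or1 | cbn; tauto].
  - eapply view_right; [apply rr_or2 | cbn; tauto].
  - eapply view_left; [apply Permutation_refl | apply lr_or | cbn; tauto].
  - eapply view_left; [apply Permutation_refl | apply lr_n; assumption | cbn; tauto].
  - eapply view_left; [apply Permutation_refl | apply lr_nef; assumption | cbn; tauto].
  - eapply view_left; [apply Permutation_refl | apply lr_copc; assumption | cbn; tauto].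
  - eapply view_right; [apply rr_an; assumption | cbn; tauto].
Qed.

Section Replacement.

Variables (Sy : system) (I : Type) (Δ Δ' : I -> list form).

Definition replaceable_at (n : nat) : Prop :=
  forall x L G phi, Permutation L (Δ x ++ G) -> dh Sy n L phi -> dh Sy n (Δ' x ++ G) phi.

Definition principal_replaceable (m : nat) : Prop :=
  forall x Y G0 G phi ps, In Y (Δ x) -> Permutation (Y :: G0) (Δ x ++ G) ->
  left_rule Sy Y phi ps -> premises_hold Sy m G0 ps -> dh Sy (S m) (Δ' x ++ G) phi.

Hypothesis axioms_kept : forall x p, In (Var p) (Δ x) -> In (Var p) (Δ' x).
Hypothesis principal_case : forall m, replaceable_at m -> principal_replaceable m.

Lemma replaceable_app m : replaceable_at m ->
  forall x Γ L G psi, Permutation L (Δ x ++ G) ->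
  dh Sy m (Γ ++ L) psi -> dh Sy m (Γ ++ Δ' x ++ G) psi.
Proof.
  intros Hrep x Γ L G psi HL D.
  apply (dh_perm _ _ (Δ' x ++ Γ ++ G)); [apply Permutation_app_swap_app|].
  apply (Hrep x (Γ ++ L)); [|exact D].
  rewrite HL. apply Permutation_app_swap_app.
Qed.

Lemma replacement_admissible : forall n, replaceable_at n.
Proof.
  intro n. induction n as [n IH] using lt_wf_ind.
  intros x L G phi HL D.
  pose proof (dh_view_of _ _ _ _ D) as V. clear D. revert IH HL.
  destruct V as [n L p Hin | n L | m L phi ps R Hps | m L Y G0 phi ps HY R Hps];
    intros IH HL.
  - apply dh_axiom. apply (Permutation_in _ HL), in_app_or in Hin.
    apply in_or_app. destruct Hin; [left; apply axioms_kept | right]; assumption.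
  - apply dh_top.
  - assert (Hm : replaceable_at m) by (apply IH; auto).
    apply (dh_right _ _ _ _ ps R). revert Hps. apply premises_hold_impl.
    intros Γ ψ. apply (replaceable_app m Hm x Γ L G ψ HL).
  - assert (Hm : replaceable_at m) by (apply IH; auto).
    assert (HY' : Permutation (Y :: G0) (Δ x ++ G)) by (rewrite <- HY; exact HL).
    destruct (in_app_or _ _ Y (Permutation_in _ HY' (in_eq Y G0))) as [Hprinc | HG].
    + exact (principal_case m Hm x Y G0 G phi ps Hprinc HY' R Hps).
    + (* [Y] lies in the passive part: apply the same rule after replacing *)
      destruct (in_perm_cons _ _ _ HG) as [G1 HG1].
      assert (HG0 : Permutation G0 (Δ x ++ G1)).
      { apply (Permutation_cons_inv (a := Y)). rewrite HY', HG1.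
        symmetry. apply Permutation_middle. }
      apply (dh_perm _ _ (Y :: Δ' x ++ G1)).
      { rewrite HG1. apply Permutation_middle. }
      apply (dh_left _ _ _ _ _ ps R). revert Hps. apply premises_hold_impl.
      intros Γ ψ. apply (replaceable_app m Hm x Γ G0 G1 ψ HG0).
Qed.

End Replacement.

Lemma invert_single Sy (I : Type) (X : I -> form) (Δ' : I -> list form) :
  (forall x p, X x <> Var p) ->
  (forall x phi ps, left_rule Sy (X x) phi ps -> In (Δ' x, phi) ps) ->
  forall n, replaceable_at Sy I (fun x => [X x]) Δ' n.
Proof.
  intros not_var premise. apply replacement_admissible.
  - intros x p [E | []]. exfalso. exact (not_var x p E).
  - intros m _ x Y G0 G phi ps [<- | []] HP R Hps.
    apply Permutation_cons_inv in HP.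
    apply dh_mono, (dh_perm _ _ (Δ' x ++ G0)); [apply Permutation_app_head, HP|].
    exact (premises_hold_In _ _ _ _ _ _ Hps (premise x phi ps R)).
Qed.

Lemma inv_and Sy n c d L G phi :
  Permutation L (And c d :: G) -> dh Sy n L phi -> dh Sy n (c :: d :: G) phi.
Proof.
  apply (invert_single Sy (form * form) (fun cd => And (fst cd) (snd cd))
           (fun cd => [fst cd; snd cd])) with (x := (c, d)).
  - intros cd p E. discriminate E.
  - intros cd phi' ps R. inversion R. left. reflexivity.
Qed.

Lemma inv_or_l Sy n c d L G phi :
  Permutation L (Or c d :: G) -> dh Sy n L phi -> dh Sy n (c :: G) phi.
Proof.
  apply (invert_single Sy (form * form) (fun cd => Or (fst cd) (snd cd))
           (fun cd => [fst cd])) with (x := (c, d)).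
  - intros cd p E. discriminate E.
  - intros cd phi' ps R. inversion R. left. reflexivity.
Qed.

Lemma inv_or_r Sy n c d L G phi :
  Permutation L (Or c d :: G) -> dh Sy n L phi -> dh Sy n (d :: G) phi.
Proof.
  apply (invert_single Sy (form * form) (fun cd => Or (fst cd) (snd cd))
           (fun cd => [snd cd])) with (x := (c, d)).
  - intros cd p E. discriminate E.
  - intros cd phi' ps R. inversion R. right. left. reflexivity.
Qed.

Lemma inv_imp Sy n c d L G phi :
  Permutation L (Imp c d :: G) -> dh Sy n L phi -> dh Sy n (d :: G) phi.
Proof.
  apply (invert_single Sy (form * form) (fun cd => Imp (fst cd) (snd cd))
           (fun cd => [snd cd])) with (x := (c, d)).
  - intros cd p E. discriminate E.
  - intros cd phi' ps R. inversion R. right. left. reflexivity.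
Qed.

(* For the negation rules the
   principal formula is repeated in the premises and is contracted directly;
   for ∧, ∨ and → the extra copy is first inverted. *)
Lemma contraction_principal Sy m a G phi ps :
  (forall x L G' psi, Permutation L (x :: x :: G') -> dh Sy m L psi ->
     dh Sy m (x :: G') psi) ->
  left_rule Sy a phi ps -> premises_hold Sy m (a :: G) ps -> dh Sy (S m) (a :: G) phi.
Proof.
  intros contract R Hps. apply (dh_left _ _ _ _ _ _ R).
  destruct R as [b c phi | b c phi | b c phi | b c _ | b c _ | b c _]; cbn in Hps |- *.
  - destruct Hps as (D1 & D2 & _). repeat split.
    + exact (contract _ _ _ _ (Permutation_refl _) D1).
    + apply (contract c (c :: c :: G)); [reflexivity|].
      exact (inv_imp _ _ b c (c :: Imp b c :: G) (c :: G) _ ltac:(perm_solve) D2).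
  - destruct Hps as (D & _). repeat split.
    pose proof (inv_and _ _ b c (b :: c :: And b c :: G) (b :: c :: G) _ ltac:(perm_solve) D) as D1.
    pose proof (contract b (b :: c :: b :: c :: G) (c :: c :: G) _ ltac:(perm_solve) D1) as D2.
    apply (dh_perm _ _ (c :: b :: G)); [perm_solve|].
    exact (contract c (b :: c :: c :: G) (b :: G) _ ltac:(perm_solve) D2).
  - destruct Hps as (D1 & D2 & _). repeat split.
    + apply (contract b (b :: b :: G)); [reflexivity|].
      exact (inv_or_l _ _ b c (b :: Or b c :: G) (b :: G) _ ltac:(perm_solve) D1).
    + apply (contract c (c :: c :: G)); [reflexivity|].
      exact (inv_or_r _ _ b c (c :: Or b c :: G) (c :: G) _ ltac:(perm_solve) D2).
  - destruct Hps as (D1 & D2 & _). repeat split.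
    + exact (contract (Neg b) (Neg b :: c :: Neg b :: G) (c :: G) _ ltac:(perm_solve) D1).
    + exact (contract (Neg b) (Neg b :: b :: Neg b :: G) (b :: G) _ ltac:(perm_solve) D2).
  - destruct Hps as (D & _). repeat split.
    exact (contract _ _ _ _ (Permutation_refl _) D).
  - destruct Hps as (D & _). repeat split.
    exact (contract (Neg b) (Neg b :: c :: Neg b :: G) (c :: G) _ ltac:(perm_solve) D).
Qed.

Lemma contraction_admissible Sy :
  forall n, replaceable_at Sy form (fun a => [a; a]) (fun a => [a]) n.
Proof.
  apply replacement_admissible.
  - intros a p [E | [E | []]]; left; exact E.
  - intros m contract a Y G0 G phi ps HY HP R Hps.
    assert (Y = a) as -> by (destruct HY as [| [| []]]; auto).
    apply Permutation_cons_inv in HP.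
    exact (contraction_principal Sy m a G phi ps contract R
             (premises_perm _ _ _ _ _ HP Hps)).
Qed.

Theorem proposition3p2 : forall (Sy : system) (n : nat) (G : list form) (a phi : form),
  dh Sy n (a :: a :: G) phi -> dh Sy n (a :: G) phi.
Proof.
  intros Sy n G a phi D.
  exact (contraction_admissible Sy n a (a :: a :: G) G phi (Permutation_refl _) D).
Qed.
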